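(* Let $\kappa$ be a regular infinite cardinal and let $\langle W^\kappa,(T_i)_{i\in\{a,b\}},\theta\rangle$ be the $*$-type space described in the context. Then: (i) $\{h\}^{W^\kappa}=[X_0^\kappa=h]$, $\{t\}^{W^\kappa}=[X_0^\kappa=t]$, and $\mathrm{dp}(\{h\})=\mathrm{dp}(\{t\})=0$; (ii) for every $i\in\{a,b\}$ and $0\le\beta<\kappa$ there are $\kappa$-expressions $\varphi_i^0(\beta),\varphi_i^1(\beta)$ of depth $\beta+1$ with $(\varphi_i^1(\beta))^{W^\kappa}=[X_i^\kappa(\beta)=1]$ and $(\varphi_i^0(\beta))^{W^\kappa}=[X_i^\kappa(\beta)=0]$; (iii) for every $i\in\{a,b\}$ and limit ordinal $\lambda<\kappa$ there are $\kappa$-expressions $\varphi_i^{\rm even}(\lambda),\varphi_i^{\rm odd}(\lambda)$ of depth $\lambda$ with $(\varphi_i^{\rm even}(\lambda))^{W^\kappa}=[\lambda\text{-par}(X_i^\kappa)=\text{even}]$ and $(\varphi_i^{\rm odd}(\lambda))^{W^\kappa}=[\lambda\text{-par}(X_i^\kappa)=\text{odd}]$.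
   Context: Records: for $\alpha\ge1$, a record of length $\alpha$ is $r\in\{0,1\}^\alpha$ such that for every limit $\lambda\le\alpha$ there is $\gamma<\lambda$ with $r(\beta)=0$ for $\gamma\le\beta<\lambda$. Parity: finite ordinals usual (0 even); infinite $\hat\lambda+n$ ($\hat\lambda$ limit) has the parity of $n$. For limit $\lambda\le\alpha$, $o^\lambda(r)$ is the least ordinal $<\lambda$ after which $r$ is $0$ below $\lambda$; $\lambda\text{-par}(r)$ is its parity. $W^0=\{h,t\}$; $W^\alpha$ ($\alpha\ge1$) = triples $(w_0,w_a^\alpha,w_b^\alpha)$, $w_0\in\{h,t\}$, $w_a^\alpha,w_b^\alpha$ records of length $\alpha$; $w^\alpha\upharpoonright\beta$ restricts both records (and $w^\alpha\upharpoonright0=w_0$); $\pi_{\beta,\alpha}(w^\alpha)=w^\alpha\upharpoonright\beta$. For $i\in\{a,b\}$, $j$ the other player, $P_i(w^\alpha)$: set of $v^\alpha$ with $v_i^\alpha=w_i^\alpha$; $w_i^\alpha(0)=1\Rightarrow v_0=w_0$; $w_i^\alpha(\beta+1)=1\Rightarrow v_j^\alpha(\beta)=w_j^\alpha(\beta)$ ($\beta+1<\alpha$); $w_i^\alpha(\lambda)=1\Rightarrow\lambda\text{-par}(v_j^\alpha)=\lambda\text{-par}(w_j^\alpha)$ (limit $\lambda<\alpha$). $T_a,T_b$ map $W^\kappa$ into finitely additive probability measures on $\mathrm{Pow}(W^\kappa)$ and satisfy for all $w^\kappa$: (a) $T_i$ constant on $P_i(w^\kappa)$; (b) $T_i(w^\kappa)(P_i(w^\kappa))=1$;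 (c) $T_i(w^\kappa)([X_0^\kappa=w_0])=1$ if $w_i^\kappa(0)=1$, $\frac12$ otherwise; (d) for $\beta<\kappa$, $T_i(w^\kappa)([X_j^\kappa(\beta)=w_j^\kappa(\beta)])=1$ if $w_i^\kappa(\beta+1)=1$, $\frac12$ otherwise; (e) for limit $\lambda<\kappa$, $T_i(w^\kappa)([\lambda\text{-par}(X_j^\kappa)=\lambda\text{-par}(w_j^\kappa)])=1$ if $w_i^\kappa(\lambda)=1$, $\frac12$ otherwise; (f) for $\beta<\alpha<\kappa$, $E^\beta\subseteq W^\beta$, $u^\kappa\upharpoonright\alpha=w^\kappa\upharpoonright\alpha$ implies equal $T_i$-values on $\pi_{\beta,\kappa}^{-1}(E^\beta)$. $\theta(w^\kappa)=w_0$. Notation: $[X_0^\kappa=c]=\{u:u_0=c\}$, $[X_i^\kappa(\beta)=c]=\{u:u_i^\kappa(\beta)=c\}$, $[\lambda\text{-par}(X_i^\kappa)=e]=\{u:\lambda\text{-par}(u_i^\kappa)=e\}$. $\kappa$-expressions over $\Sigma_S=\mathrm{Pow}(\{h,t\})$, $I=\{a,b\}$: least set containing each $E\subseteq\{h,t\}$ and closed under $\neg$, $B_i^p$ ($p\in[0,1]$), and conjunctions of fewer than $\kappa$ (nonempty) expressions. Semantics: $E^{W^\kappa}=\theta^{-1}(E)$, complement, $(B_i^p\varphi)^{W^\kappa}=\{w:T_i(w)(\varphi^{W^\kappa})\ge p\}$, intersection. Depth: $\mathrm{dp}(E)=0$, $\mathrm{dp}(\neg\varphi)=\mathrm{dp}(\varphi)$,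 $\mathrm{dp}(B_i^p\varphi)=\mathrm{dp}(\varphi)+1$, $\mathrm{dp}(\bigwedge\Psi)=\sup_{\varphi\in\Psi}\mathrm{dp}(\varphi)$. *)

From Stdlib Require Import Reals.
Local Open Scope R_scope.

Section Kappa.
Variables (K : Type) (lt : K -> K -> Prop).

Definition le (x y : K) : Prop := lt x y \/ x = y.
Definition is_zero (z : K) : Prop := forall x, ~ lt x z.
Definition is_succ (b s : K) : Prop := lt b s /\ forall x, lt b x -> le s x.
Definition is_limit (l : K) : Prop :=
  (exists x, lt x l) /\ forall x, lt x l -> exists y, lt x y /\ lt y l.
Definition is_sup {I : Type} (f : I -> K) (d : K) : Prop :=
  (forall i, le (f i) d) /\ forall d', (forall i, le (f i) d') -> le d d'.

Definition injective {A B : Type} (f : A -> B) : Prop :=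
  forall x y, f x = f y -> x = y.
Definition card_lt_K (A : Type) : Prop := ~ exists f : K -> A, injective f.

(** (K, lt) is (order-isomorphic to) a regular infinite cardinal kappa:
    a strict well-order, nonempty without maximum (a limit ordinal),
    every proper initial segment has smaller cardinality (initial ordinal),
    and every subset of cardinality < kappa is bounded (regularity). *)
Definition regular_infinite_cardinal : Prop :=
  (forall x, ~ lt x x) /\
  (forall x y z, lt x y -> lt y z -> lt x z) /\
  (forall x y, lt x y \/ x = y \/ lt y x) /\
  well_founded lt /\
  inhabited K /\
  (forall x, exists y, lt x y) /\
  (forall b, card_lt_K {x : K | lt x b}) /\
  (forall S : K -> Prop, card_lt_K {x : K | S x} ->
     exists b, forall x, S x -> lt x b).

(** parity: true = odd, false = even.  0 and limits are even, successors flip. *)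
Inductive Par : K -> bool -> Prop :=
| Par_zero z : is_zero z -> Par z false
| Par_limit l : is_limit l -> Par l false
| Par_succ b s e : is_succ b s -> Par b e -> Par s (negb e).

Definition tail_zero (r : K -> bool) (l g : K) : Prop :=
  forall b, le g b -> lt b l -> r b = false.
Definition is_record (r : K -> bool) : Prop :=
  (forall l, is_limit l -> exists g, lt g l /\ tail_zero r l g) /\
  (exists g, forall b, le g b -> r b = false).

Definition o_lam (l : K) (r : K -> bool) (g : K) : Prop :=
  lt g l /\ tail_zero r l g /\
  forall g', lt g' l -> tail_zero r l g' -> le g g'.
Definition lpar (l : K) (r : K -> bool) (e : bool) : Prop :=
  exists g, o_lam l r g /\ Par g e.

Inductive HT : Type := h | t.
Inductive player : Type := pa | pb.
Definition other (i : player) : player := match i with pa => pb | pb => pa end.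

Definition W : Type :=
  {x : HT * (K -> bool) * (K -> bool) | is_record (snd (fst x)) /\ is_record (snd x)}.
Definition w0 (w : W) : HT := fst (fst (proj1_sig w)).
Definition rec (i : player) (w : W) : K -> bool :=
  match i with pa => snd (fst (proj1_sig w)) | pb => snd (proj1_sig w) end.

Definition Pset (i : player) (w : W) (v : W) : Prop :=
  (forall b, rec i v b = rec i w b) /\
  (forall z, is_zero z -> rec i w z = true -> w0 v = w0 w) /\
  (forall b s, is_succ b s -> rec i w s = true ->
     rec (other i) v b = rec (other i) w b) /\
  (forall l, is_limit l -> rec i w l = true ->
     exists e, lpar l (rec (other i) v) e /\ lpar l (rec (other i) w) e).

Definition fa_prob (mu : (W -> Prop) -> R) : Prop :=
  (forall A, 0 <= mu A) /\
  mu (fun _ => True) = 1 /\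
  (forall A B, (forall x, A x -> B x -> False) ->
     mu (fun x => A x \/ B x) = mu A + mu B).

Definition agree (a : K) (u w : W) : Prop :=
  w0 u = w0 w /\ forall x, lt x a -> rec pa u x = rec pa w x /\ rec pb u x = rec pb w x.
(** E is of the form pi_{beta,kappa}^{-1}(E^beta) *)
Definition determined_by (b : K) (E : W -> Prop) : Prop :=
  forall u v, agree b u v -> (E u <-> E v).

Definition half_or_one (c : bool) : R := if c then 1 else / 2.

Definition star_type_space (T : player -> W -> (W -> Prop) -> R) : Prop :=
  (forall i w, fa_prob (T i w)) /\
  (forall i w v, Pset i w v -> forall A, T i v A = T i w A) /\
  (forall i w, T i w (Pset i w) = 1) /\
  (forall i w z, is_zero z ->
     T i w (fun u => w0 u = w0 w) = half_or_one (rec i w z)) /\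
  (forall i w b s, is_succ b s ->
     T i w (fun u => rec (other i) u b = rec (other i) w b)
       = half_or_one (rec i w s)) /\
  (forall i w l, is_limit l ->
     T i w (fun u => exists e, lpar l (rec (other i) u) e /\
                               lpar l (rec (other i) w) e)
       = half_or_one (rec i w l)) /\
  (forall i b a u w, lt b a -> agree a u w ->
     forall E, determined_by b E -> T i u E = T i w E).

(** kappa-expressions; conjunctions are indexed by {x | x <= b} for b < kappa,
    i.e. nonempty families of fewer than kappa expressions. *)
Inductive expr : Type :=
| EAtom (E : HT -> Prop)
| ENeg (phi : expr)
| EB (i : player) (p : R) (hp : 0 <= p <= 1) (phi : expr)
| EConj (b : K) (f : {x : K | le x b} -> expr).

Fixpoint sem (T : player -> W -> (W -> Prop) -> R) (phi : expr) (w : W) : Prop :=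
  match phi with
  | EAtom E => E (w0 w)
  | ENeg psi => ~ sem T psi w
  | EB i p _ psi => T i w (sem T psi) >= p
  | EConj b f => forall x, sem T (f x) w
  end.

Inductive Depth : expr -> K -> Prop :=
| Depth_atom E z : is_zero z -> Depth (EAtom E) z
| Depth_neg psi d : Depth psi d -> Depth (ENeg psi) d
| Depth_B i p hp psi d s : Depth psi d -> is_succ d s -> Depth (EB i p hp psi) s
| Depth_conj b f (ds : {x : K | le x b} -> K) d :
    (forall x, Depth (f x) (ds x)) -> is_sup ds d -> Depth (EConj b f) d.

End Kappa.

Arguments w0 {K lt}.
Arguments rec {K lt}.

From Pilot Require Import Defs.
From Stdlib Require Import Bool Reals Lra.
From Stdlib Require Import Classical ClassicalEpsilon FunctionalExtensionality PropExtensionality.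
Local Open Scope R_scope.

(* By well-founded recursion on [b], player [i]'s bit [X_i(b)] is expressed as
   [B_i^1 phi \/ B_i^1 ~phi]: "[i] is sure which cell of the partition decided by [phi] he is in".
   Here [phi] describes the coin [theta] if [b = 0], the other player's bit at [g] if [b = g + 1],
   and the other player's [b]-parity if [b] is a limit; by conditions (c), (d), (e) player [i]
   gives the cell containing [w] probability 1 or 1/2 according to [X_i(b)], and the complementary
   cell the rest.  The [l]-parity is in turn definable from the bits below [l]: "the record
   vanishes on [[g, l)]" is a conjunction of negated bit formulas, [o^l] is the least such [g],
   and the parity formula is a disjunction over the [g < l] of the right parity.  A bit formula at
   [b] has depth [b + 1], so these conjunctions over [[g, l)] have depth [sup (x + 1) = l]. *)

Lemma measure_ext {A : Type} (mu : (A -> Prop) -> R) (P Q : A -> Prop) :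
  (forall u, P u <-> Q u) -> mu P = mu Q.
Proof.
  intros HPQ. f_equal. apply functional_extensionality. intros u.
  apply propositional_extensionality, HPQ.
Qed.

Section Kappa.

Variables (K : Type) (lt : K -> K -> Prop).
Hypothesis hK : regular_infinite_cardinal K lt.

Local Notation le := (le K lt).
Local Notation is_zero := (is_zero K lt).
Local Notation is_succ := (is_succ K lt).
Local Notation is_limit := (is_limit K lt).
Local Notation Par := (Par K lt).
Local Notation tail_zero := (tail_zero K lt).
Local Notation o_lam := (o_lam K lt).
Local Notation lpar := (lpar K lt).
Local Notation is_record := (is_record K lt).

Lemma lt_irrefl x : ~ lt x x.
Proof. exact (proj1 hK x). Qed.

Lemma lt_trans x y z : lt x y -> lt y z -> lt x z.
Proof. exact (proj1 (proj2 hK) x y z). Qed.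

Lemma lt_trichotomy x y : lt x y \/ x = y \/ lt y x.
Proof. exact (proj1 (proj2 (proj2 hK)) x y). Qed.

Lemma lt_wf : well_founded lt.
Proof. exact (proj1 (proj2 (proj2 (proj2 hK)))). Qed.

Lemma lt_le_asym x y : lt x y -> le y x -> False.
Proof.
  intros Hxy [Hyx | ->]; [exact (lt_irrefl x (lt_trans _ _ _ Hxy Hyx)) | exact (lt_irrefl x Hxy)].
Qed.

Lemma le_lt_trans x y z : le x y -> lt y z -> lt x z.
Proof. intros [Hxy | ->] Hyz; [exact (lt_trans _ _ _ Hxy Hyz) | exact Hyz]. Qed.

Lemma not_lt_le x y : ~ lt y x -> le x y.
Proof.
  intros N. destruct (lt_trichotomy x y) as [H | [H | H]]; [left | right | contradiction]; exact H.
Qed.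

Lemma exists_least (P : K -> Prop) : (exists x, P x) -> exists m, P m /\ forall y, P y -> le m y.
Proof.
  intros [x Px]. induction x as [x IH] using (well_founded_ind lt_wf).
  destruct (classic (exists y, P y /\ lt y x)) as [[y [Py Hyx]] | N]; [exact (IH y Hyx Py) |].
  exists x. split; [exact Px |]. intros y Py. apply not_lt_le. intros Hyx. apply N. now exists y.
Qed.

Lemma exists_zero : exists z, is_zero z.
Proof.
  destruct (proj1 (proj2 (proj2 (proj2 (proj2 hK))))) as [x].
  destruct (exists_least (fun _ => True)) as [m [_ Hm]]; [now exists x |].
  exists m. intros y Hy. exact (lt_le_asym _ _ Hy (Hm y I)).
Qed.

Lemma zero_le z x : is_zero z -> le z x.
Proof. intros Z. apply not_lt_le, Z. Qed.

Lemma exists_succ b : exists s, is_succ b s.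
Proof.
  destruct (exists_least (lt b)) as [s [Hbs Hs]].
  - exact (proj1 (proj2 (proj2 (proj2 (proj2 (proj2 hK))))) b).
  - now exists s.
Qed.

Lemma pred_unique b b' s : is_succ b s -> is_succ b' s -> b = b'.
Proof.
  intros [Hbs Hs] [Hbs' Hs'].
  destruct (lt_trichotomy b b') as [H | [E | H]]; [exfalso | exact E | exfalso].
  - exact (lt_le_asym _ _ Hbs' (Hs b' H)).
  - exact (lt_le_asym _ _ Hbs (Hs' b H)).
Qed.

Lemma zero_lt_limit z l : is_zero z -> is_limit l -> lt z l.
Proof.
  intros Z [[x Hxl] _]. exact (le_lt_trans _ _ _ (zero_le z x Z) Hxl).
Qed.

Lemma succ_lt_limit x s l : is_succ x s -> is_limit l -> lt x l -> lt s l.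
Proof.
  intros [_ Hs] [_ L] Hxl. destruct (L x Hxl) as [y [Hxy Hyl]].
  exact (le_lt_trans _ _ _ (Hs y Hxy) Hyl).
Qed.

Lemma zero_not_limit z : is_zero z -> is_limit z -> False.
Proof. intros Z [[x Hx] _]. exact (Z x Hx). Qed.

Lemma zero_not_succ b z : is_zero z -> is_succ b z -> False.
Proof. intros Z [Hbz _]. exact (Z b Hbz). Qed.

Lemma limit_not_succ b l : is_limit l -> is_succ b l -> False.
Proof. intros L S. exact (lt_irrefl l (succ_lt_limit b l l S L (proj1 S))). Qed.

Lemma ordinal_cases g : is_zero g \/ is_limit g \/ exists b, is_succ b g.
Proof.
  destruct (classic (is_zero g)) as [Z | Z]; [now left | right].
  assert (Hpos : exists x, lt x g).
  { apply NNPP. intros N. apply Z. intros x Hx. apply N. now exists x. }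
  destruct (classic (exists b, is_succ b g)) as [S | S]; [now right | left].
  split; [exact Hpos |]. intros x Hxg. apply NNPP. intros N. apply S. exists x.
  split; [exact Hxg |]. intros y Hxy. apply not_lt_le. intros Hyg. apply N. now exists y.
Qed.

Lemma Par_exists g : exists e, Par g e.
Proof.
  induction g as [g IH] using (well_founded_ind lt_wf).
  destruct (ordinal_cases g) as [Z | [L | [b S]]].
  - exists false. now apply Par_zero.
  - exists false. now apply Par_limit.
  - destruct (IH b (proj1 S)) as [e He]. exists (negb e). exact (Par_succ K lt b g e S He).
Qed.

Lemma Par_unique g e1 e2 : Par g e1 -> Par g e2 -> e1 = e2.
Proof.
  revert e1 e2. induction g as [g IH] using (well_founded_ind lt_wf).
  intros e1 e2 H1 H2. destruct H1 as [z Z | l L | b s e S P]; inversion H2; subst.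
  all: try reflexivity.
  all: try solve [exfalso; eauto using zero_not_limit, zero_not_succ, limit_not_succ].
  match goal with S' : is_succ ?b' s |- _ => rewrite <- (pred_unique b b' s S S') in * end.
  f_equal. eapply IH; [exact (proj1 S) | eassumption | eassumption].
Qed.

Lemma o_lam_exists l r : is_record r -> is_limit l -> exists g, o_lam l r g.
Proof.
  intros [Hr _] L.
  destruct (exists_least (fun g => lt g l /\ tail_zero r l g)) as [g [[Hgl Hg] Hmin]].
  - exact (Hr l L).
  - exists g. repeat split; auto.
Qed.

Lemma o_lam_unique l r g g' : o_lam l r g -> o_lam l r g' -> g = g'.
Proof.
  intros [Hgl [Hg Hmin]] [Hgl' [Hg' Hmin']].
  destruct (Hmin g' Hgl' Hg') as [H | E]; [| exact E].
  exfalso. exact (lt_le_asym _ _ H (Hmin' g Hgl Hg)).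
Qed.

Lemma lpar_exists l r : is_record r -> is_limit l -> exists e, lpar l r e.
Proof.
  intros Hr L. destruct (o_lam_exists l r Hr L) as [g Hg]. destruct (Par_exists g) as [e He].
  now exists e, g.
Qed.

Lemma lpar_unique l r e1 e2 : lpar l r e1 -> lpar l r e2 -> e1 = e2.
Proof.
  intros [g [Hg P]] [g' [Hg' P']]. rewrite <- (o_lam_unique l r g g' Hg Hg') in P'.
  exact (Par_unique g e1 e2 P P').
Qed.

Lemma exists_Par_below_limit l e : is_limit l -> exists g, lt g l /\ Par g e.
Proof.
  intros L. destruct exists_zero as [z Z]. destruct (exists_succ z) as [o Ho].
  destruct e.
  - exists o. split; [exact (succ_lt_limit z o l Ho L (zero_lt_limit z l Z L)) |].
    exact (Par_succ K lt z o false Ho (Par_zero K lt z Z)).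
  - exists z. split; [exact (zero_lt_limit z l Z L) | exact (Par_zero K lt z Z)].
Qed.

Lemma rec_is_record i (u : W K lt) : is_record (rec i u).
Proof. destruct u as [x [Ha Hb]]. now destruct i. Qed.

Lemma lpar_agree_iff l r r' :
  is_record r -> is_record r' -> is_limit l ->
  ((lpar l r false <-> lpar l r' false) <-> exists e, lpar l r e /\ lpar l r' e).
Proof.
  intros Hr Hr' L. destruct (lpar_exists l r Hr L) as [e He].
  destruct (lpar_exists l r' Hr' L) as [e' He']. split.
  - intros Hiff. exists e'. split; [| exact He'].
    destruct e'; [| now apply Hiff]. destruct e; [exact He |].
    discriminate (lpar_unique l r' _ _ He' (proj1 Hiff He)).
  - intros [e'' [H H']]. split; intros Hf.
    + now rewrite (lpar_unique l r e'' false H Hf) in H'.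
    + now rewrite (lpar_unique l r' e'' false H' Hf) in H.
Qed.

Lemma fa_prob_sure_or_sure (mu : (W K lt -> Prop) -> R) A B k :
  fa_prob K lt mu -> (forall u, B u <-> ~ A u) -> mu A = half_or_one k ->
  (mu A >= 1 \/ mu B >= 1 <-> k = true).
Proof.
  intros [Hpos [Htot Hadd]] HB HA.
  assert (Hsum : mu A + mu B = 1).
  { rewrite <- Hadd by (intros u Ha Hb; now apply HB in Hb). rewrite <- Htot.
    apply measure_ext. intros u. rewrite HB. split; [trivial | intros _; apply classic]. }
  pose proof (Hpos A). pose proof (Hpos B).
  destruct k; cbn in HA; split; intros H'; try reflexivity; try discriminate; lra.
Qed.

Section Expressions.

Variable T : player -> W K lt -> (W K lt -> Prop) -> R.

Local Notation expr := (expr K lt).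
Local Notation sem := (sem K lt T).
Local Notation Depth := (Depth K lt).

(* Meaningful only for nonzero [z], when [{x | x <= z}] has an index other than [z]. *)
Definition EAnd (z : K) (A B : expr) : expr :=
  EConj K lt z (fun x => if excluded_middle_informative (proj1_sig x = z) then A else B).

Definition EOr (z : K) (A B : expr) : expr := ENeg K lt (EAnd z (ENeg K lt A) (ENeg K lt B)).

(* Indices outside [P] are padded with the tautology, of depth zero. *)
Definition EForall (b : K) (P : K -> Prop) (f : K -> expr) : expr :=
  EConj K lt b (fun x => if excluded_middle_informative (P (proj1_sig x))
                         then f (proj1_sig x) else EAtom K lt (fun _ => True)).

Definition EExists (b : K) (P : K -> Prop) (f : K -> expr) : expr :=
  ENeg K lt (EForall b P (fun x => ENeg K lt (f x))).

Lemma sem_EAnd y z A B w : lt y z -> sem (EAnd z A B) w <-> sem A w /\ sem B w.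
Proof.
  intros Hyz. cbn [Defs.sem EAnd]. split.
  - intros Hall.
    pose proof (Hall (exist _ z (or_intror eq_refl))) as HA.
    pose proof (Hall (exist _ y (or_introl Hyz))) as HB. cbn in HA, HB.
    destruct (excluded_middle_informative (z = z)) as [_ | N]; [| now contradiction N].
    destruct (excluded_middle_informative (y = z)) as [-> | _]; [now destruct (lt_irrefl z) |].
    now split.
  - intros [HA HB] [x Hx]. cbn. now destruct (excluded_middle_informative (x = z)).
Qed.

Lemma sem_EOr y z A B w : lt y z -> sem (EOr z A B) w <-> sem A w \/ sem B w.
Proof.
  intros Hyz. unfold EOr. cbn [Defs.sem]. rewrite (sem_EAnd y z) by exact Hyz. cbn [Defs.sem].
  split; [intros N; apply NNPP; tauto | tauto].
Qed.

Lemma sem_EForall b P f w :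
  (forall x, P x -> le x b) -> sem (EForall b P f) w <-> forall x, P x -> sem (f x) w.
Proof.
  intros HP. cbn [Defs.sem EForall]. split.
  - intros Hall x Px. specialize (Hall (exist _ x (HP x Px))). cbn in Hall.
    now destruct (excluded_middle_informative (P x)).
  - intros Hall [x Hx]. cbn. destruct (excluded_middle_informative (P x)); [auto | exact I].
Qed.

Lemma sem_EExists b P f w :
  (forall x, P x -> le x b) -> sem (EExists b P f) w <-> exists x, P x /\ sem (f x) w.
Proof.
  intros HP. unfold EExists. cbn [Defs.sem]. rewrite sem_EForall by exact HP. cbn [Defs.sem].
  split; [intros N; apply NNPP; intros M; apply N; intros x Px Hx; apply M; now exists x |].
  intros [x [Px Hx]] N. exact (N x Px Hx).
Qed.

Lemma Depth_EAnd z A B d : Depth A d -> Depth B d -> Depth (EAnd z A B) d.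
Proof.
  intros HA HB. apply (Depth_conj K lt z _ (fun _ => d)).
  - intros [x Hx]. cbn. now destruct (excluded_middle_informative (x = z)).
  - split; [intros; now right |]. intros d' Hd'. exact (Hd' (exist _ z (or_intror eq_refl))).
Qed.

Lemma Depth_EOr z A B d : Depth A d -> Depth B d -> Depth (EOr z A B) d.
Proof. intros HA HB. now apply Depth_neg, Depth_EAnd; apply Depth_neg. Qed.

Lemma Depth_EForall b P f (ds : K -> K) d :
  (forall x, P x -> le x b) -> (forall x, P x -> Depth (f x) (ds x)) ->
  (forall x, P x -> le (ds x) d) -> (forall d', (forall x, P x -> le (ds x) d') -> le d d') ->
  Depth (EForall b P f) d.
Proof.
  intros HP Hf Hub Hleast. destruct exists_zero as [z Z].
  apply (Depth_conj K lt b _ (fun x => if excluded_middle_informative (P (proj1_sig x))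
                                       then ds (proj1_sig x) else z)).
  - intros [x Hx]. cbn. destruct (excluded_middle_informative (P x)); [auto | now apply Depth_atom].
  - split.
    + intros [x Hx]. cbn. destruct (excluded_middle_informative (P x)); [auto | now apply zero_le].
    + intros d' Hd'. apply Hleast. intros x Px. specialize (Hd' (exist _ x (HP x Px))). cbn in Hd'.
      now destruct (excluded_middle_informative (P x)).
Qed.

Lemma Depth_EForall_const b P f x0 d :
  (forall x, P x -> le x b) -> P x0 -> (forall x, P x -> Depth (f x) d) -> Depth (EForall b P f) d.
Proof.
  intros HP Px0 Hf. apply (Depth_EForall b P f (fun _ => d)); auto.
  - intros x _. now right.
  - intros d' Hd'. exact (Hd' x0 Px0).
Qed.

Lemma Depth_EExists_const b P f x0 d :
  (forall x, P x -> le x b) -> P x0 -> (forall x, P x -> Depth (f x) d) -> Depth (EExists b P f) d.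
Proof.
  intros HP Px0 Hf. apply Depth_neg, (Depth_EForall_const b P _ x0); auto.
  intros x Px. now apply Depth_neg, Hf.
Qed.

Definition bit_formula (i : player) (b : K) (phi : expr) : Prop :=
  (forall s, is_succ b s -> Depth phi s) /\ forall w, sem phi w <-> rec i w b = true.

Section Parity.

Variables (i : player) (l : K) (Phi : K -> expr).
Hypothesis Hl : is_limit l.
Hypothesis HPhi : forall d, lt d l -> bit_formula i d (Phi d).

Definition vanish_from (g : K) : expr :=
  EForall l (fun x => le g x /\ lt x l) (fun x => ENeg K lt (Phi x)).

Definition vanishing_point (g : K) : expr :=
  EForall l (fun x => le x g) (fun x => if excluded_middle_informative (x = g)
                                        then vanish_from x else ENeg K lt (vanish_from x)).

Definition parity_formula (e : bool) : expr :=
  EExists l (fun g => lt g l /\ Par g e) vanishing_point.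

Lemma sem_vanish_from g w : sem (vanish_from g) w <-> tail_zero (rec i w) l g.
Proof.
  unfold vanish_from. rewrite sem_EForall by (intros x [_ Hxl]; now left). cbn [Defs.sem].
  unfold tail_zero. split.
  - intros H x Hgx Hxl. apply not_true_iff_false. rewrite <- (proj2 (HPhi x Hxl) w). auto.
  - intros H x [Hgx Hxl]. rewrite (proj2 (HPhi x Hxl) w), H by assumption. discriminate.
Qed.

(* The supremum of the successors of [x] over [g <= x < l] is the limit [l]. *)
Lemma Depth_vanish_from g : lt g l -> Depth (vanish_from g) l.
Proof.
  intros Hgl. destruct (choice _ exists_succ) as [S HS].
  apply (Depth_EForall _ _ _ S).
  - intros x [_ Hxl]. now left.
  - intros x [_ Hxl]. apply Depth_neg, (proj1 (HPhi x Hxl)), HS.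
  - intros x [_ Hxl]. left. exact (succ_lt_limit x (S x) l (HS x) Hl Hxl).
  - intros d' Hd'. apply not_lt_le. intros Hd'l.
    destruct (lt_trichotomy d' g) as [Hd'g | Hgd'].
    + apply (lt_le_asym d' (S g)); [exact (lt_trans _ _ _ Hd'g (proj1 (HS g))) |].
      apply Hd'. split; [now right | exact Hgl].
    + apply (lt_le_asym d' (S d')); [exact (proj1 (HS d')) |].
      apply Hd'. split; [destruct Hgd' as [<- | H]; [now right | now left] | exact Hd'l].
Qed.

Lemma sem_vanishing_point g w : lt g l -> sem (vanishing_point g) w <-> o_lam l (rec i w) g.
Proof.
  intros Hgl. unfold vanishing_point.
  rewrite sem_EForall by (intros x Hxg; left; exact (le_lt_trans _ _ _ Hxg Hgl)).
  split.
  - intros H.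
    assert (Hg : tail_zero (rec i w) l g).
    { specialize (H g (or_intror eq_refl)).
      destruct (excluded_middle_informative (g = g)) as [_ | N]; [| now contradiction N].
      now apply sem_vanish_from. }
    split; [exact Hgl | split; [exact Hg |]]. intros g' Hg'l Hg'.
    apply not_lt_le. intros Hg'g. specialize (H g' (or_introl Hg'g)).
    destruct (excluded_middle_informative (g' = g)) as [-> | _]; [exact (lt_irrefl g Hg'g) |].
    apply H. now apply sem_vanish_from.
  - intros [_ [Hg Hmin]] x Hxg.
    destruct (excluded_middle_informative (x = g)) as [-> | Hne]; [now apply sem_vanish_from |].
    cbn [Defs.sem]. rewrite sem_vanish_from. intros Hx.
    destruct Hxg as [Hxg | ->]; [| now contradiction Hne].
    exact (lt_le_asym _ _ Hxg (Hmin x (lt_trans _ _ _ Hxg Hgl) Hx)).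
Qed.

Lemma Depth_vanishing_point g : lt g l -> Depth (vanishing_point g) l.
Proof.
  intros Hgl. apply (Depth_EForall_const _ _ _ g).
  - intros x Hxg. left. exact (le_lt_trans _ _ _ Hxg Hgl).
  - now right.
  - intros x Hxg.
    pose proof (le_lt_trans _ _ _ Hxg Hgl) as Hxl.
    destruct (excluded_middle_informative (x = g)); [| apply Depth_neg];
      now apply Depth_vanish_from.
Qed.

Lemma sem_parity_formula e w : sem (parity_formula e) w <-> lpar l (rec i w) e.
Proof.
  unfold parity_formula. rewrite sem_EExists by (intros x [Hxl _]; now left). split.
  - intros [g [[Hgl Hg] H]]. exists g. split; [now apply sem_vanishing_point | exact Hg].
  - intros [g [Ho Hg]]. exists g. split; [split; [exact (proj1 Ho) | exact Hg] |].
    apply sem_vanishing_point; [exact (proj1 Ho) | exact Ho].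
Qed.

Lemma Depth_parity_formula e : Depth (parity_formula e) l.
Proof.
  destruct (exists_Par_below_limit l e Hl) as [g0 Hg0].
  apply (Depth_EExists_const _ _ _ g0); [intros x [Hxl _]; now left | exact Hg0 |].
  intros g [Hgl _]. now apply Depth_vanishing_point.
Qed.

End Parity.

Section Certainty.

Hypothesis hT : star_type_space K lt T.
Variables (o0 o1 : K).
Hypothesis o0_lt_o1 : lt o0 o1.

Definition ESure (i : player) (phi : expr) : expr := EB K lt i 1 (conj Rle_0_1 (Rle_refl 1)) phi.

Definition ECertain (i : player) (phi : expr) : expr :=
  EOr o1 (ESure i phi) (ESure i (ENeg K lt phi)).

Lemma sem_ECertain i phi b w :
  T i w (fun u => sem phi u <-> sem phi w) = half_or_one (rec i w b) ->
  sem (ECertain i phi) w <-> rec i w b = true.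
Proof.
  intros Hcell. unfold ECertain. rewrite (sem_EOr o0 o1) by exact o0_lt_o1. cbn [Defs.sem ESure].
  destruct (classic (sem phi w)) as [Hw | Hw].
  - apply (fa_prob_sure_or_sure _ _ _ _ (proj1 hT i w)); [reflexivity |].
    rewrite <- Hcell. apply measure_ext. tauto.
  - rewrite or_comm. apply (fa_prob_sure_or_sure _ _ _ _ (proj1 hT i w)).
    + intros u. cbn [Defs.sem]. split; [tauto | apply NNPP].
    + rewrite <- Hcell. apply measure_ext. cbn [Defs.sem]. tauto.
Qed.

Lemma bit_formula_ECertain i b phi :
  Depth phi b -> (forall w, T i w (fun u => sem phi u <-> sem phi w) = half_or_one (rec i w b)) ->
  bit_formula i b (ECertain i phi).
Proof.
  intros Hd Hcell. split.
  - intros s Hs. apply Depth_EOr; apply (Depth_B K lt _ _ _ _ b); auto. now apply Depth_neg.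
  - intros w. apply sem_ECertain, Hcell.
Qed.

Lemma bit_formula_zero i z :
  is_zero z -> bit_formula i z (ECertain i (EAtom K lt (fun x => x = h))).
Proof.
  intros Z. apply bit_formula_ECertain; [now apply Depth_atom |]. intros w.
  destruct hT as (_ & _ & _ & Hc & _). rewrite <- (Hc i w z Z). apply measure_ext. intros u.
  cbn [Defs.sem]. destruct (w0 u), (w0 w); intuition congruence.
Qed.

Lemma bit_formula_succ i g b phi :
  is_succ g b -> bit_formula (other i) g phi -> bit_formula i b (ECertain i phi).
Proof.
  intros Hgb [Hd Hs]. apply bit_formula_ECertain; [exact (Hd b Hgb) |]. intros w.
  destruct hT as (_ & _ & _ & _ & Hsucc & _). rewrite <- (Hsucc i w g b Hgb). apply measure_ext.
  intros u. rewrite !Hs. destruct (rec (other i) u g), (rec (other i) w g); intuition congruence.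
Qed.

Lemma bit_formula_limit i l Phi :
  is_limit l -> (forall d, lt d l -> bit_formula (other i) d (Phi d)) ->
  bit_formula i l (ECertain i (parity_formula l Phi false)).
Proof.
  intros L HPhi. apply bit_formula_ECertain; [now apply Depth_parity_formula with (i := other i) |].
  intros w. destruct hT as (_ & _ & _ & _ & _ & Hlim & _). rewrite <- (Hlim i w l L).
  apply measure_ext. intros u. rewrite !(sem_parity_formula (other i)) by exact HPhi.
  apply lpar_agree_iff; [apply rec_is_record | apply rec_is_record | exact L].
Qed.

Lemma exists_bit_formula b : forall i, exists phi, bit_formula i b phi.
Proof.
  induction b as [b IH] using (well_founded_ind lt_wf). intros i.
  destruct (ordinal_cases b) as [Z | [L | [g Hgb]]].
  - eexists. now apply bit_formula_zero.
  - assert (Hfam : forall d, exists phi, lt d b -> bit_formula (other i) d phi).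
    { intros d. destruct (classic (lt d b)) as [Hd | Hd].
      - destruct (IH d Hd (other i)) as [phi Hphi]. now exists phi.
      - exists (EAtom K lt (fun _ => True)). now intros. }
    destruct (choice _ Hfam) as [Phi HPhi]. eexists. now apply (bit_formula_limit i b Phi).
  - destruct (IH g (proj1 Hgb) (other i)) as [phi Hphi]. eexists.
    exact (bit_formula_succ i g b phi Hgb Hphi).
Qed.

End Certainty.

End Expressions.

End Kappa.

Theorem lemma9 (K : Type) (lt : K -> K -> Prop)
  (hK : regular_infinite_cardinal K lt)
  (T : player -> W K lt -> (W K lt -> Prop) -> R)
  (hT : star_type_space K lt T) :
  (* (i) *)
  ((forall w, sem K lt T (EAtom K lt (fun x => x = h)) w <-> w0 w = h) /\
   (forall w, sem K lt T (EAtom K lt (fun x => x = t)) w <-> w0 w = t) /\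
   (forall z, is_zero K lt z -> Depth K lt (EAtom K lt (fun x => x = h)) z) /\
   (forall z, is_zero K lt z -> Depth K lt (EAtom K lt (fun x => x = t)) z)) /\
  (* (ii) *)
  (forall (i : player) (b s : K), is_succ K lt b s ->
     exists phi0 phi1 : expr K lt,
       Depth K lt phi0 s /\ Depth K lt phi1 s /\
       (forall w, sem K lt T phi1 w <-> rec i w b = true) /\
       (forall w, sem K lt T phi0 w <-> rec i w b = false)) /\
  (* (iii) *)
  (forall (i : player) (l : K), is_limit K lt l ->
     exists phie phio : expr K lt,
       Depth K lt phie l /\ Depth K lt phio l /\
       (forall w, sem K lt T phie w <-> lpar K lt l (rec i w) false) /\
       (forall w, sem K lt T phio w <-> lpar K lt l (rec i w) true)).
Proof.
  destruct (exists_zero K lt hK) as [z Z]. destruct (exists_succ K lt hK z) as [o Ho].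
  pose proof (exists_bit_formula K lt hK T hT z o (proj1 Ho)) as Hbit.
  split; [| split].
  - split; [| split; [| split]]; intros; try reflexivity; now apply Depth_atom.
  - intros i b s Hs. destruct (Hbit b i) as [phi [Hd Hsem]].
    exists (ENeg K lt phi), phi. split; [| split; [| split]].
    + now apply Depth_neg, Hd.
    + now apply Hd.
    + exact Hsem.
    + intros w. cbn [sem]. rewrite Hsem. apply not_true_iff_false.
  - intros i l L. destruct (choice _ (fun d => Hbit d i)) as [Phi HPhi].
    exists (parity_formula K lt l Phi false), (parity_formula K lt l Phi true).
    split; [| split; [| split]].
    + now apply Depth_parity_formula with (T := T) (i := i).
    + now apply Depth_parity_formula with (T := T) (i := i).
    + intros w. now apply sem_parity_formula.
    + intros w. now apply sem_parity_formula.
Qed.
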